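(* For all integers $k>1$ and $d\ge k$ there exist a finite point set $P\subset\mathbb{R}^d$ and properties $a_1,\dots,a_k\colon P\to\{-1,1\}$, each strictly linearly separable on $P$, such that exactly $2^k-1$ distinct labels occur in $P$, and such that for every unit vector $w\in\mathbb{R}^d$ the following holds: if $a_2,\dots,a_k$ are all strictly linearly separable on the projected set $P'$, then $a_1$ is also strictly linearly separable on $P'$.
   Context: For a finite $P\subset\mathbb{R}^d$ with properties $a_i\colon P\to\{-1,1\}$, write $P^i_{-}=\{p\in P: a_i(p)=-1\}$ and $P^i_{+}=\{p\in P: a_i(p)=1\}$. The label of $p$ is the tuple $(a_1(p),\dots,a_k(p))$. For a unit vector $w$, the projection along $w$ maps $p$ to $p'=p-(p\cdot w)w\in w^\perp$, and $P'$ denotes the image of $P$ (properties are carried over: $a_i(p')=a_i(p)$). Two finite sets $X,Y$ contained in a linear subspace $L$ are strictly linearly separable (in $L$) if there exist a unit vector $v\in L$ and $c\in\mathbb{R}$ with $v\cdot x<c<v\cdot y$ for all $x\in X,y\in Y$; for projected sets $L=w^\perp$, otherwise $L=\mathbb{R}^d$. A property $a_i$ is strictly linearly separable on a set if the corresponding sets $P^i_-$ and $P^i_+$ (resp. their projections) are. *)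

From Stdlib Require Import Reals.
From HB Require Import structures.
From mathcomp Require Import all_boot all_order all_algebra.
From mathcomp Require Import Rstruct.
Set Implicit Arguments. Unset Strict Implicit. Unset Printing Implicit Defensive.
Import Order.TTheory GRing.Theory Num.Theory.
Local Open Scope ring_scope.

Definition dotv (d : nat) (u v : 'rV[R]_d) : R := (u *m v^T) 0 0.

Definition projw (d : nat) (w p : 'rV[R]_d) : 'rV[R]_d := p - (dotv p w) *: w.

Definition strict_sep_in (d : nat) (L : 'rV[R]_d -> Prop)
    (X Y : seq 'rV[R]_d) : Prop :=
  exists (v : 'rV[R]_d) (c : R),
    [/\ L v, dotv v v = 1,
        (forall x, x \in X -> dotv v x < c) &
        (forall y, y \in Y -> c < dotv v y)].

Definition fullspace (d : nat) : 'rV[R]_d -> Prop := fun _ => True.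
Definition perp (d : nat) (w : 'rV[R]_d) : 'rV[R]_d -> Prop :=
  fun v => dotv v w = 0.

(* A property a : 'rV -> bool encodes a map to {-1,1}: true = +1, false = -1.
   P^-_a and P^+_a: *)
Definition Pminus (d : nat) (a : 'rV[R]_d -> bool) (P : seq 'rV[R]_d) :=
  [seq p <- P | ~~ a p].
Definition Pplus (d : nat) (a : 'rV[R]_d -> bool) (P : seq 'rV[R]_d) :=
  [seq p <- P | a p].

Definition sep_on (d : nat) (a : 'rV[R]_d -> bool) (P : seq 'rV[R]_d) : Prop :=
  strict_sep_in (@fullspace d) (Pminus a P) (Pplus a P).

Definition sep_on_proj (d : nat) (w : 'rV[R]_d) (a : 'rV[R]_d -> bool)
    (P : seq 'rV[R]_d) : Prop :=
  strict_sep_in (perp w) (map (projw w) (Pminus a P)) (map (projw w) (Pplus a P)).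

(* label of p for properties a_1..a_k, indexed 0..k-1 *)
Definition label (d k : nat) (a : nat -> 'rV[R]_d -> bool) (p : 'rV[R]_d)
  : seq bool := [seq a i p | i <- iota 0 k].

Definition nlabels (d k : nat) (a : nat -> 'rV[R]_d -> bool) (P : seq 'rV[R]_d)
  : nat := size (undup [seq label k a p | p <- P]).

From Pilot Require Import Defs.
From Stdlib Require Import Reals.
From HB Require Import structures.
From mathcomp Require Import all_boot all_order all_algebra.
From mathcomp Require Import Rstruct.
From mathcomp Require Import ring lra.
Import Order.TTheory GRing.Theory Num.Theory.
Set Implicit Arguments.
Unset Strict Implicit.
Unset Printing Implicit Defensive.
Local Open Scope ring_scope.

(* Write k = m + 1 (so 0 < m < d) and number the
   properties a 0, ..., a m.  All points live in the first m coordinates and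
   every property is an open half-space: a 0 is 1/2 < p_0 + ... + p_(m-1)
   and a (j+1) is 0 < p_j.  Hence each property is separable, and the label
   (true, false, ..., false) never occurs: a 0 needs a positive coordinate.
   The set P contains
   - one point per remaining label, realising it (2^k - 1 labels in all);
   - gadget points +-(e_j + s d e_l), s = +-1, and +-e_j.
   Let w be a unit vector.  If w has a nonzero part u outside the first m
   coordinates, correcting the normal (1,...,1,0,...,0) of a 0 by a multiple
   of u gives a functional orthogonal to w that agrees with that normal on P,
   so a 0 stays separable after projection.  Otherwise take j maximising |w_j|: a separator
   of a (j+1) after projection is a functional v orthogonal to w, and the
   gadgets force |v_l| <= v_j / d for l <> j, which contradicts v.w = 0.
   The file develops inner-product and separation facts, then the counting of
   labels, then the construction, and finally the theorem. *)

Section InnerProduct.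
Context {d : nat}.
Implicit Types u v w x y p : 'rV[R]_d.

Lemma dotvE u v : dotv u v = \sum_(i < d) u 0 i * v 0 i.
Proof. by rewrite /dotv !mxE; apply: eq_bigr => i _; rewrite !mxE. Qed.

Lemma dotvC u v : dotv u v = dotv v u.
Proof. by rewrite !dotvE; apply: eq_bigr => i _; rewrite mulrC. Qed.

Lemma dotv0l v : dotv 0 v = 0.
Proof. by rewrite dotvE big1 // => i _; rewrite mxE mul0r. Qed.

Lemma dotvDr u x y : dotv u (x + y) = dotv u x + dotv u y.
Proof. by rewrite !dotvE -big_split; apply: eq_bigr => i _; rewrite !mxE mulrDr. Qed.

Lemma dotvZr u t x : dotv u (t *: x) = t * dotv u x.
Proof. by rewrite !dotvE mulr_sumr; apply: eq_bigr => i _; rewrite !mxE mulrCA. Qed.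

Lemma dotvNr u x : dotv u (- x) = - dotv u x.
Proof. by rewrite -scaleN1r dotvZr mulN1r. Qed.

Lemma dotvBr u x y : dotv u (x - y) = dotv u x - dotv u y.
Proof. by rewrite dotvDr dotvNr. Qed.

Lemma dotvZl u t x : dotv (t *: x) u = t * dotv x u.
Proof. by rewrite dotvC dotvZr dotvC. Qed.

Lemma dotvBl u x y : dotv (x - y) u = dotv x u - dotv y u.
Proof. by rewrite dotvC dotvBr !(dotvC u). Qed.

Lemma dotv_projw v w p : dotv v w = 0 -> dotv v (projw w p) = dotv v p.
Proof. by move=> vw; rewrite /projw dotvBr dotvZr vw mulr0 subr0. Qed.

Lemma dotv_gt0 v : v != 0 -> 0 < dotv v v.
Proof.
move=> v_neq0; have [i vi_neq0] : exists i, v 0 i != 0.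
  apply/existsP; apply: contraR v_neq0 => /existsPn v0; apply/eqP/rowP => i.
  by rewrite mxE; apply/eqP; move: (v0 i); rewrite negbK.
rewrite dotvE (bigD1 i) //= ltr_pwDl //.
  by rewrite -expr2 lt_def sqr_ge0 andbT sqrf_eq0.
by apply: sumr_ge0 => j _; rewrite -expr2 sqr_ge0.
Qed.

Lemma perp_correction n u w : dotv u w != 0 ->
  exists2 v, dotv v w = 0 & forall p, dotv u p = 0 -> dotv v p = dotv n p.
Proof.
move=> uw_neq0; exists (n - (dotv n w / dotv u w) *: u).
  by rewrite dotvBl dotvZl; field.
by move=> p up0; rewrite dotvBl dotvZl up0 mulr0 subr0.
Qed.

Lemma no_dominant_coordinate v w (j : 'I_d) :
  dotv v w = 0 -> 0 < v 0 j -> w 0 j != 0 ->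
  (forall l, l != j -> `|v 0 l * w 0 l| <= v 0 j * `|w 0 j| / d%:R) -> False.
Proof.
move=> vw vj_gt0 wj_neq0 small.
have d_gt0 : 0 < d%:R :> R by rewrite ltr0n (leq_ltn_trans (leq0n j) (ltn_ord j)).
set c := v 0 j * `|w 0 j| / d%:R.
have c_gt0 : 0 < c by rewrite divr_gt0 // mulr_gt0 // normr_gt0.
have sum_c : \sum_(i < d) c = v 0 j * `|w 0 j|.
  by rewrite sumr_const card_ord -mulr_natr /c divfK // lt0r_neq0.
rewrite dotvE (bigD1 j) //= in vw; rewrite (bigD1 j) //= in sum_c.
set S := \sum_(i < d | i != j) v 0 i * w 0 i in vw.
have S_le : `|S| <= \sum_(i < d | i != j) c.
  by apply: le_trans (ler_norm_sum _ _ _) _; apply: ler_sum => i /small.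
have : `|v 0 j * w 0 j| = `|S| by rewrite -normrN; congr `|_|; lra.
rewrite normrM (gtr0_norm vj_gt0); lra.
Qed.
End InnerProduct.

Lemma exists_above (T : eqType) (f : T -> R) (t : R) (Y : seq T) :
  (forall y, y \in Y -> t < f y) ->
  exists2 c, t < c & forall y, y \in Y -> c < f y.
Proof.
elim: Y => [|y Y IH] tY; first by exists (t + 1) => //; lra.
have [c t_lt_c cY] := IH (fun z zY => tY z (@mem_behead _ (y :: Y) _ zY)).
have ty := tY y (mem_head _ _).
exists (Num.min c ((t + f y) / 2)); first by rewrite lt_min t_lt_c /=; lra.
move=> z; rewrite in_cons => /orP [/eqP -> | /cY cz].
  by rewrite gt_min; apply/orP; right; lra.
by rewrite gt_min cz.
Qed.

Lemma strict_sep_of_threshold d (L : 'rV[R]_d -> Prop) X Y v t :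
  (forall s x, L x -> L (s *: x)) -> L v -> v != 0 ->
  (forall x, x \in X -> dotv v x <= t) -> (forall y, y \in Y -> t < dotv v y) ->
  strict_sep_in L X Y.
Proof.
move=> LZ Lv v_neq0 vX /exists_above [c t_lt_c vY].
have vv_gt0 := dotv_gt0 v_neq0.
set n := Num.sqrt (dotv v v).
have n_gt0 : 0 < n by rewrite sqrtr_gt0.
have scale z : dotv (n^-1 *: v) z = dotv v z / n by rewrite dotvZl mulrC.
exists (n^-1 *: v), (c / n); split.
- exact: LZ.
- rewrite scale dotvZr -[dotv v v](sqr_sqrtr (ltW vv_gt0)) -/n.
  by field; rewrite gt_eqF.
- by move=> x /vX vx; rewrite scale ltr_pM2r ?invr_gt0 //; apply: le_lt_trans t_lt_c.
- by move=> y /vY vy; rewrite scale ltr_pM2r ?invr_gt0.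
Qed.

Definition halfspace d (n : 'rV[R]_d) (t : R) : 'rV[R]_d -> bool :=
  fun p => t < dotv n p.

Lemma sep_halfspace d (n : 'rV[R]_d) t P : n != 0 -> sep_on (halfspace n t) P.
Proof.
move=> n_neq0; apply: (strict_sep_of_threshold (v := n) (t := t)) => //.
- by move=> x; rewrite mem_filter leNgt => /andP [].
- by move=> y; rewrite mem_filter => /andP [].
Qed.

Lemma sep_proj_halfspace d (w n v : 'rV[R]_d) t P :
  dotv v w = 0 -> v != 0 -> (forall p, p \in P -> dotv v p = dotv n p) ->
  sep_on_proj w (halfspace n t) P.
Proof.
move=> vw v_neq0 vn.
apply: (strict_sep_of_threshold (v := v) (t := t)) => //.
- by move=> s x; rewrite /perp dotvZl => ->; rewrite mulr0.
- move=> _ /mapP [x + ->]; rewrite mem_filter => /andP [xn xP].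
  by rewrite dotv_projw // vn // leNgt.
- move=> _ /mapP [y + ->]; rewrite mem_filter => /andP [yn yP].
  by rewrite dotv_projw // vn.
Qed.

Lemma sep_proj_order d (w : 'rV[R]_d) a P : sep_on_proj w a P ->
  exists2 v, dotv v w = 0 & forall x y, x \in P -> y \in P -> ~~ a x -> a y ->
    dotv v x < dotv v y.
Proof.
move=> [v [c [vw _ vX vY]]]; exists v => // x y xP yP ax ay.
have /vX : projw w x \in map (projw w) (Defs.Pminus a P) by rewrite map_f // mem_filter ax.
have /vY : projw w y \in map (projw w) (Defs.Pplus a P) by rewrite map_f // mem_filter ay.
by rewrite !dotv_projw // => cy xc; apply: lt_trans xc cy.
Qed.

Definition boolseqs (n : nat) : seq (seq bool) :=
  [seq tval t | t <- enum {: n.-tuple bool}].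

Lemma mem_boolseqs n s : (s \in boolseqs n) = (size s == n).
Proof.
apply/mapP/idP => [[t _ ->]|s_n]; first by rewrite size_tuple.
by exists (Tuple s_n); rewrite ?mem_enum.
Qed.

Lemma size_boolseqs n : size (boolseqs n) = (2 ^ n)%N.
Proof. by rewrite size_map -cardE card_tuple card_bool. Qed.

Lemma uniq_boolseqs n : uniq (boolseqs n).
Proof. by rewrite map_inj_uniq ?enum_uniq //; apply: val_inj. Qed.

Definition missing_label (m : nat) : seq bool := true :: nseq m false.
Definition admissible_labels (m : nat) : seq (seq bool) :=
  rem (missing_label m) (boolseqs m.+1).

Lemma mem_admissible m s :
  (s \in admissible_labels m) = (s != missing_label m) && (size s == m.+1).
Proof. by rewrite (mem_rem_uniq _ (uniq_boolseqs _)) inE mem_boolseqs. Qed.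

Lemma size_admissible m : size (admissible_labels m) = (2 ^ m.+1 - 1)%N.
Proof.
by rewrite size_rem ?size_boolseqs ?subn1 // mem_boolseqs /= size_nseq.
Qed.

Lemma uniq_admissible m : uniq (admissible_labels m).
Proof. exact/rem_uniq/uniq_boolseqs. Qed.

Lemma nlabels_eq d k (a : nat -> 'rV[R]_d -> bool) P (T : seq (seq bool)) :
  uniq T -> (forall p, p \in P -> label k a p \in T) ->
  (forall s, s \in T -> exists2 p, p \in P & label k a p = s) ->
  nlabels k a P = size T.
Proof.
move=> T_uniq PT TP; apply/perm_size/uniq_perm => // [|s]; first exact: undup_uniq.
rewrite mem_undup; apply/mapP/idP => [[p /PT + ->] //|/TP [p pP <-]].
by exists p.
Qed.

(* Coordinate vectors, the indicator of the first m coordinates, and the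
   properties of the construction: a_1 = prop 0 is the half-space
   1/2 < p_0 + ... + p_(m-1), and a_(j+2) = prop (j+1) is 0 < p_j. *)
Definition unitv (d j : nat) : 'rV[R]_d := \row_(i < d) ((i : nat) == j)%:R.
Definition ones (m d : nat) : 'rV[R]_d := \row_(i < d) (if (i < m)%N then 1 else 0).
Definition normal (m d i : nat) : 'rV[R]_d :=
  if i is j.+1 then unitv d j else ones m d.
Definition threshold (i : nat) : R := if i is _.+1 then 0 else 2^-1.
Definition prop (m d i : nat) : 'rV[R]_d -> bool :=
  halfspace (normal m d i) (threshold i).
Arguments prop : clear implicits.

(* The point carrying label b0 :: bs: its coordinate i < m is positive
   exactly when the i-th entry of bs holds, and is 2 or -1/(2d) if b0 holds,
   1/(2d) or -1 otherwise; so the sum of these coordinates exceeds 1/2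
   exactly when b0 holds and some entry of bs does. *)
Definition tiny (d : nat) : R := (2 * d%:R)^-1.
Definition coord_value (d : nat) (b0 b : bool) : R :=
  if b0 then (if b then 2 else - tiny d) else (if b then tiny d else -1).
Definition label_point (m d : nat) (s : seq bool) : 'rV[R]_d :=
  \row_(i < d) (if (i < m)%N
                then coord_value d (head false s) (nth false (behead s) i)
                else 0).

(* Gadget points e_j + s d e_l (and e_j for l = j); together with their
   opposites they force any separator of a_(j+2) to weigh coordinate j
   d times more than every other first coordinate. *)
Definition gadget (d j l : nat) (s : R) : 'rV[R]_d :=
  unitv d j + (if l == j then 0 else s * d%:R) *: unitv d l.
Definition index_pairs (m : nat) : seq (nat * nat) :=
  [seq (j, l) | j <- iota 0 m, l <- iota 0 m].
Definition gadgets (m d : nat) : seq 'rV[R]_d :=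
  [seq gadget d jl.1 jl.2 s | jl <- index_pairs m, s <- [:: 1; -1]].

Definition witness_set (m d : nat) : seq 'rV[R]_d :=
  [seq label_point m d s | s <- admissible_labels m]
    ++ gadgets m d ++ map -%R (gadgets m d).

Section Construction.
Variables m d : nat.
Hypothesis m_gt0 : (0 < m)%N.
Hypothesis m_lt_d : (m < d)%N.

Lemma dotv_unitv (j : 'I_d) p : dotv (unitv d j) p = p 0 j.
Proof.
rewrite dotvE (bigD1 j) //= big1 ?addr0 => [|i]; first by rewrite mxE eqxx mul1r.
by rewrite -val_eqE mxE /= => /negbTE ->; rewrite mul0r.
Qed.

Lemma dotv_ones p : dotv (ones m d) p = \sum_(i < d) (if (i < m)%N then p 0 i else 0).
Proof.
by rewrite dotvE; apply: eq_bigr => i _; rewrite mxE; case: ifP; rewrite ?mul1r ?mul0r.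
Qed.

Lemma prop_succ (j : 'I_d) p : prop m d j.+1 p = (0 < p 0 j).
Proof. by rewrite /prop /halfspace /= dotv_unitv. Qed.

Lemma label_cons p :
  label m.+1 (prop m d) p = prop m d 0 p :: [seq prop m d j.+1 p | j <- iota 0 m].
Proof. by rewrite /label /= -[1%N]/(1 + 0)%N iotaDl -map_comp. Qed.

Lemma nth_label_tail p (j : 'I_d) : (j < m)%N ->
  nth false [seq prop m d i.+1 p | i <- iota 0 m] j = (0 < p 0 j).
Proof. by move=> jm; rewrite (nth_map 0%N) ?size_iota // nth_iota // prop_succ. Qed.

Lemma label_ne_missing p : label m.+1 (prop m d) p != missing_label m.
Proof.
apply/eqP; rewrite label_cons => -[a0 rest].
have p_le0 (i : 'I_d) : (i < m)%N -> p 0 i <= 0.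
  move=> im; have := congr1 (nth false ^~ (nat_of_ord i)) rest.
  by rewrite nth_nseq im nth_label_tail // => /negbT; rewrite -leNgt.
have : \sum_(i < d) (if (i < m)%N then p 0 i else 0) <= 0.
  by apply: sumr_le0 => i _; case: ifPn => // /p_le0.
by move: a0; rewrite /prop /halfspace /= dotv_ones; lra.
Qed.

Lemma tiny_gt0 : 0 < tiny d.
Proof. by rewrite invr_gt0 mulr_gt0 // ltr0n (leq_ltn_trans (leq0n m)). Qed.

Lemma sum_tiny : \sum_(i < d) tiny d = 2^-1.
Proof.
rewrite sumr_const card_ord /tiny -[_ *+ d]mulr_natr invfM divfK //.
by rewrite pnatr_eq0 -lt0n (leq_ltn_trans (leq0n m)).
Qed.

Lemma coord_value_gt0 b0 b : (0 < coord_value d b0 b) = b.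
Proof.
have := tiny_gt0; rewrite /coord_value.
by case: b0; case: b => ?; [apply/idP | apply/negbTE; rewrite -leNgt
  | apply/idP | apply/negbTE; rewrite -leNgt]; lra.
Qed.

Lemma ones_label_point b0 bs : dotv (ones m d) (label_point m d (b0 :: bs)) =
  \sum_(i < d) (if (i < m)%N then coord_value d b0 (nth false bs i) else 0).
Proof. by rewrite dotv_ones; apply: eq_bigr => i _; rewrite mxE /=; case: (i < m)%N. Qed.

Lemma prop0_label_point_false bs : prop m d 0 (label_point m d (false :: bs)) = false.
Proof.
apply/negbTE; rewrite /prop /halfspace /= ones_label_point -leNgt -sum_tiny.
apply: ler_sum => i _; have := tiny_gt0; rewrite /coord_value.
by case: ifP => _; [case: nth | ]; lra.
Qed.

Lemma prop0_label_point_true bs (j : 'I_d) : (j < m)%N -> nth false bs j ->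
  prop m d 0 (label_point m d (true :: bs)) = true.
Proof.
move=> jm bj; rewrite /prop /halfspace /= ones_label_point.
pose g (i : 'I_d) := if (i < m)%N then coord_value d true (nth false bs i) else 0.
change (2^-1 < \sum_(i < d) g i).
have g_ge (i : 'I_d) : - tiny d <= g i.
  by have := tiny_gt0; rewrite /g /coord_value; case: ifP => _; [case: nth | ]; lra.
have gj : g j = 2 by rewrite /g jm bj.
have : g j + tiny d <= \sum_(i < d) (g i + tiny d).
  rewrite (bigD1 j) //= lerDl; apply: sumr_ge0 => i _.
  by have := g_ge i; lra.
have -> : \sum_(i < d) (g i + tiny d) = \sum_(i < d) g i + \sum_(i < d) tiny d.
  by rewrite big_split.
by rewrite sum_tiny gj; have := tiny_gt0; lra.
Qed.

Lemma label_label_point s : s \in admissible_labels m ->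
  label m.+1 (prop m d) (label_point m d s) = s.
Proof.
rewrite mem_admissible => /andP [].
case: s => [//|b0 bs] s_ne /= /eqP [bs_m].
rewrite label_cons; congr (_ :: _); last first.
  rewrite -{2}(mkseq_nth false bs) bs_m /mkseq; apply/eq_in_map => j.
  rewrite mem_iota add0n /= => jm.
  by rewrite (prop_succ (Ordinal (ltn_trans jm m_lt_d))) mxE /= jm coord_value_gt0.
case: b0 s_ne => s_ne; last exact: prop0_label_point_false.
have : true \in bs.
  apply: contraR s_ne => bs_false; apply/eqP; congr (_ :: _); rewrite -bs_m.
  by apply/all_pred1P/allP => -[] // t_bs; case/negP: bs_false.
rewrite -index_mem bs_m => jm.
apply: (prop0_label_point_true (j := Ordinal (ltn_trans jm m_lt_d))) => //.
by rewrite nth_index // -index_mem bs_m.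
Qed.

Lemma nlabels_witness :
  nlabels m.+1 (prop m d) (witness_set m d) = (2 ^ m.+1 - 1)%N.
Proof.
rewrite -size_admissible; apply: nlabels_eq (uniq_admissible m) _ _.
  by move=> p _; rewrite mem_admissible label_ne_missing size_map size_iota eqxx.
move=> s s_adm; exists (label_point m d s); last exact: label_label_point.
by rewrite mem_cat map_f.
Qed.

Lemma normal_neq0 i : (i <= m)%N -> normal m d i != 0.
Proof.
case: i => [|j] im; apply/negP => /eqP/rowP.
  move/(_ (Ordinal (ltn_trans m_gt0 m_lt_d))); rewrite !mxE /= m_gt0.
  by move/eqP; rewrite oner_eq0.
by move/(_ (Ordinal (ltn_trans im m_lt_d))); rewrite !mxE /= eqxx => /eqP; rewrite oner_eq0.
Qed.

Lemma sep_witness i : (i < m.+1)%N -> sep_on (prop m d i) (witness_set m d).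
Proof. by move=> im; apply/sep_halfspace/normal_neq0; rewrite -ltnS. Qed.

Lemma mem_index_pairs j l : ((j, l) \in index_pairs m) = (j < m)%N && (l < m)%N.
Proof.
apply/allpairsP/andP => [[[a b] [+ + [-> ->]]]|[jm lm]]; first by rewrite !mem_iota.
by exists (j, l); rewrite !mem_iota.
Qed.

Lemma mem_gadgets p : p \in gadgets m d ->
  exists j l s, [/\ (j < m)%N, (l < m)%N & p = gadget d j l s].
Proof.
case/allpairsP => [[[j l] s] [/= + _ ->]].
by rewrite mem_index_pairs => /andP [jm lm]; exists j, l, s.
Qed.

Lemma gadget_in j l s : (j < m)%N -> (l < m)%N -> s \in [:: 1; -1] ->
  gadget d j l s \in witness_set m d /\ - gadget d j l s \in witness_set m d.
Proof.
move=> jm lm s_sign.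
have g_in : gadget d j l s \in gadgets m d.
  apply: (allpairs_f (fun jl s => gadget d jl.1 jl.2 s) (x := (j, l))) => //.
  by rewrite mem_index_pairs jm lm.
by rewrite !mem_cat g_in map_f ?orbT.
Qed.

Lemma witness_vanish p : p \in witness_set m d ->
  forall i : 'I_d, (m <= i)%N -> p 0 i = 0.
Proof.
move=> pP i mi; have off k : (k < m)%N -> ((i : nat) == k) = false.
  by move=> km; apply/negbTE; rewrite neq_ltn (leq_trans km mi) orbT.
have gadget0 q : q \in gadgets m d -> q 0 i = 0.
  by case/mem_gadgets => [j [l [s [jm lm ->]]]]; rewrite !mxE !off // mulr0 addr0.
move: pP; rewrite !mem_cat => /or3P [/mapP [s _ ->] | /gadget0 // | /mapP [q /gadget0 q0 ->]].
  by rewrite mxE ltnNge mi.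
by rewrite mxE q0 oppr0.
Qed.

Lemma dotv_gadget v (j l : 'I_d) s :
  dotv v (gadget d j l s) = v 0 j + (if (l : nat) == j then 0 else s * d%:R) * v 0 l.
Proof. by rewrite dotvDr dotvZr !(dotvC v) !dotv_unitv. Qed.

Lemma gadget_at (j l : 'I_d) s : gadget d j l s 0 j = 1.
Proof.
rewrite !mxE eqxx; case: (eqVneq (l : nat) j) => [_|lj]; first by rewrite mul0r addr0.
by rewrite mulr0 addr0.
Qed.

Definition tail_part (w : 'rV[R]_d) : 'rV[R]_d :=
  \row_(i < d) (if (i < m)%N then 0 else w 0 i).

Lemma tail_part_orth w (p : 'rV[R]_d) : (forall i : 'I_d, (m <= i)%N -> p 0 i = 0) ->
  dotv (tail_part w) p = 0.
Proof.
move=> p_off; rewrite dotvE big1 // => i _; rewrite mxE.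
by case: ltnP => [_|/p_off ->]; rewrite ?mul0r ?mulr0.
Qed.

Lemma tail_part_dot w : dotv (tail_part w) w = dotv (tail_part w) (tail_part w).
Proof. by rewrite !dotvE; apply: eq_bigr => i _; rewrite !mxE; case: ifP; rewrite ?mul0r. Qed.

(* If w leaves the first m coordinates, a_1 survives the projection: a
   functional orthogonal to w agrees with the normal of a_1 on P. *)
Lemma sep_proj_prop0_tail w : tail_part w != 0 ->
  sep_on_proj w (prop m d 0) (witness_set m d).
Proof.
move=> u_neq0; have uw_neq0 : dotv (tail_part w) w != 0.
  by rewrite tail_part_dot lt0r_neq0 // dotv_gt0.
have [v vw v_ones] := perp_correction (ones m d) uw_neq0.
apply: (sep_proj_halfspace _ vw); last first.
  by move=> p /witness_vanish/(tail_part_orth w); apply: v_ones.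
pose i0 := Ordinal (ltn_trans m_gt0 m_lt_d).
have e0_off (i : 'I_d) : (m <= i)%N -> unitv d i0 0 i = 0.
  by move=> mi; rewrite mxE; case: eqP => // i0E; move: mi; rewrite i0E leqNgt m_gt0.
apply/negP => /eqP v0; have := v_ones _ (@tail_part_orth w _ e0_off).
by rewrite v0 dotv0l dotvC dotv_unitv mxE /= m_gt0 => /eqP; rewrite eq_sym oner_eq0.
Qed.

Lemma gadget_constraints v (j : 'I_d) : (j < m)%N ->
  (forall x y, x \in witness_set m d -> y \in witness_set m d ->
     ~~ prop m d j.+1 x -> prop m d j.+1 y -> dotv v x < dotv v y) ->
  0 < v 0 j /\ forall l : 'I_d, (l < m)%N -> l != j -> `|v 0 l| <= v 0 j / d%:R.
Proof.
move=> jm v_order.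
have v_gadget (l : 'I_d) s : (l < m)%N -> s \in [:: 1; -1] ->
    0 < v 0 j + (if (l : nat) == j then 0 else s * d%:R) * v 0 l.
  move=> lm s_sign; have [g_in ng_in] := gadget_in jm lm s_sign.
  have := v_order _ _ ng_in g_in.
  rewrite !prop_succ mxE !gadget_at dotvNr dotv_gadget ltr01 oppr_gt0 ltr10.
  by move=> /(_ isT isT); set t := v 0 j + _; lra.
have vj_gt0 : 0 < v 0 j.
  by have := v_gadget j 1 jm (mem_head _ _); rewrite eqxx mul0r addr0.
split=> // l lm lj; have d_gt0 : 0 < d%:R :> R by rewrite ltr0n (leq_ltn_trans (leq0n m)).
have := v_gadget l 1 lm (mem_head _ _); have := v_gadget l (-1) lm.
rewrite !inE eqxx orbT val_eqE (negbTE lj) ler_pdivlMr // => /(_ isT) h1 h2.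
by case: (lerP 0 (v 0 l)) => v0; [rewrite ger0_norm | rewrite ltr0_norm]; nra.
Qed.

(* If w lies in the first m coordinates, the hypothesis cannot hold: for j
   maximising |w_j|, a separator of a_(j+2) orthogonal to w has, by the gadget
   constraints, a dominant coordinate j, contradicting v.w = 0. *)
Lemma no_sep_proj_head w : tail_part w = 0 -> dotv w w = 1 ->
  (forall i, (1 <= i < m.+1)%N -> sep_on_proj w (prop m d i) (witness_set m d)) ->
  False.
Proof.
move=> tail0 w_unit seps.
have w_off (i : 'I_d) : (m <= i)%N -> w 0 i = 0.
  by move=> mi; have := congr1 (fun u : 'rV[R]_d => u 0 i) tail0; rewrite !mxE ltnNge mi.
pose i0 := Ordinal (ltn_trans m_gt0 m_lt_d).
case: (@arg_maxP _ _ _ i0 predT (fun i => `|w 0 i|) isT) => j _ j_max.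
have wj_neq0 : w 0 j != 0.
  apply/negP => /eqP wj0; suff w0 : w = 0 by move: w_unit; rewrite w0 dotv0l; lra.
  apply/rowP => i; rewrite mxE; apply/eqP; rewrite -normr_eq0 eq_le normr_ge0 andbT.
  by have := j_max i isT; rewrite wj0 normr0.
have jm : (j < m)%N by rewrite ltnNge; apply: contra wj_neq0 => /w_off ->.
have [v vw /(gadget_constraints jm) [vj_gt0 v_small]] := sep_proj_order (seps j.+1 jm).
apply: (no_dominant_coordinate vw vj_gt0 wj_neq0) => l lj.
have [lm | /w_off ->] := ltnP l m; last first.
  by rewrite mulr0 normr0 divr_ge0 // mulr_ge0 // ltW.
by rewrite normrM mulrAC; apply: ler_pM => //; [exact: v_small | exact: j_max].
Qed.

Lemma sep_proj_witness w : dotv w w = 1 ->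
  (forall i, (1 <= i < m.+1)%N -> sep_on_proj w (prop m d i) (witness_set m d)) ->
  sep_on_proj w (prop m d 0) (witness_set m d).
Proof.
move=> w_unit seps; have [tail0 | tail_neq0] := eqVneq (tail_part w) 0.
  by case: (no_sep_proj_head tail0 w_unit seps).
exact: sep_proj_prop0_tail.
Qed.
End Construction.

Theorem mainTheorem2 (k d : nat) (hk : (1 < k)%N) (hd : (k <= d)%N) :
  exists (P : seq 'rV[R]_d) (a : nat -> 'rV[R]_d -> bool),
    [/\ (forall i, (i < k)%N -> sep_on (a i) P),
        nlabels k a P = (2 ^ k - 1)%N &
        forall w : 'rV[R]_d, dotv w w = 1 ->
          (forall i, (1 <= i < k)%N -> sep_on_proj w (a i) P) ->
          sep_on_proj w (a 0%N) P].
Proof.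
case: k hk hd => [//|m] m_gt0 m_lt_d.
exists (witness_set m d), (prop m d); split.
- by move=> i; apply: sep_witness.
- exact: nlabels_witness.
- exact: sep_proj_witness.
Qed.
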